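(* Let $K,L,T$ be positive integers and let $(\alpha,\beta)\in\mathcal{A}(K,L,T)$ be a degree table, with $N=\operatorname{N}(\alpha,\beta)$. Then: (1) $KL+\max\{K,L\}+2T-1 \le N$; (2) if $3\max\{K,L\}+3T-2 < KL$ or $2 \le K = L$, then $KL+\max\{K,L\}+2T \le N$; (3) $KL+K+L+2T-1-T\min\{K,L,T\} \le N$.
   Context: A degree table with parameters $K,L,T$ is a tuple $(\alpha_{\mathrm p},\alpha_{\mathrm s},\beta_{\mathrm p},\beta_{\mathrm s})$ of nonnegative integer vectors of lengths $K,T,L,T$ respectively such that, writing $\alpha=(\alpha_{\mathrm p}\mid\alpha_{\mathrm s})$ and $\beta=(\beta_{\mathrm p}\mid\beta_{\mathrm s})$ for the concatenations: (i) all entries of $\alpha$ are distinct; (ii) all entries of $\beta$ are distinct; (iii) for every integer $n\in\operatorname{Set}(\alpha_{\mathrm p})+\operatorname{Set}(\beta_{\mathrm p})$ there is a unique $i\in\operatorname{Set}(\alpha)$ and a unique $j\in\operatorname{Set}(\beta)$ with $n=i+j$. Here $\operatorname{Set}(v)$ is the set of entries of $v$ and $A+B=\{a+b:a\in A,b\in B\}$. $\mathcal{A}(K,L,T)$ denotes the set of all such degree tables, and $\operatorname{N}(\alpha,\beta)=|\operatorname{Set}(\alpha)+\operatorname{Set}(\beta)|$. *)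

From mathcomp Require Import all_boot all_order all_algebra.
Set Implicit Arguments. Unset Strict Implicit. Unset Printing Implicit Defensive.

Definition degree_table (K L T : nat) (ap as_ bp bs : seq nat) : Prop :=
  [/\ size ap = K, size as_ = T, size bp = L & size bs = T] /\
  [/\ uniq (ap ++ as_),
      uniq (bp ++ bs) &
      forall n : nat,
        (exists a b, [/\ a \in ap, b \in bp & n = a + b]) ->
        exists! ij : nat * nat,
          [/\ ij.1 \in ap ++ as_, ij.2 \in bp ++ bs & n = ij.1 + ij.2] ].

Definition sumset_card (alpha beta : seq nat) : nat :=
  size (undup [seq i + j | i <- alpha, j <- beta]).

From mathcomp Require Import all_boot all_order all_algebra.
From mathcomp Require Import zify.
Set Implicit Arguments. Unset Strict Implicit. Unset Printing Implicit Defensive.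

(* The K L primary sums ap + bp are pairwise distinct and, since their representations are
   unique, differ from every sum with a summand in as_ or bs; so N is at least K L plus the
   number of these secondary sums, among which are those of A + bs, A = ap ++ as_.
   (1) A + bs has at least |A| + |bs| - 1 elements (the integer Cauchy-Davenport bound);
   exchanging the two sides gives the bound with L.
   (2) If |A + bs| = |A| + |bs| - 1, then for every x in A the set A + bs consists exactly
   of the a + min bs (a < x), the x + bs and the a + max bs (a > x). If it also contained
   every s + b (s in as_, b in bp), each such b would lie outside [min bs, max bs], and two
   elements of bp would give a second representation of a primary sum. So N gains one.
   (3) For fixed s in as_, every t in bs puts at most T sums s + b (b in bp) into A + t:
   one through ap and T - 1 through as_ minus s. Hence at least L - T^2 of them are new. *)

Definition sumset (X Y : seq nat) : seq nat := [seq x + y | x <- X, y <- Y].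

Lemma seq_min_exists (s : seq nat) : s != [::] ->
  exists2 m, m \in s & forall x, x \in s -> m <= x.
Proof.
case: s => // x s _.
by case: (ex_minnP (ex_intro (fun n => n \in x :: s) x (mem_head x s))) => m; exists m.
Qed.

Lemma seq_max_exists (s : seq nat) : s != [::] ->
  exists2 m, m \in s & forall x, x \in s -> x <= m.
Proof.
case: s => // x s _.
have ub y : y \in x :: s -> y <= \max_(z <- x :: s) z by move=> ys; apply: leq_bigmax_seq.
by case: (ex_maxnP (ex_intro (fun n => n \in x :: s) x (mem_head x s)) ub) => m; exists m.
Qed.

Lemma uniq_size_gt1 (s : seq nat) : uniq s -> 1 < size s ->
  exists b b', [/\ b \in s, b' \in s & b < b'].
Proof.
case: s => [|x [|y s]] //= /andP[]; rewrite inE negb_or => /andP[xy _] _ _.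
have xs : x \in [:: x, y & s] by rewrite mem_head.
have ys : y \in [:: x, y & s] by rewrite !inE eqxx orbT.
by case: (ltngtP x y) => [lt|gt|eq]; [exists x, y | exists y, x | rewrite eq eqxx in xy].
Qed.

Lemma uniq_cat_disjoint (T : eqType) (s1 s2 : seq T) x :
  uniq (s1 ++ s2) -> x \in s1 -> x \in s2 -> False.
Proof. by rewrite cat_uniq => /and3P[_ /hasPn/(_ x) h _] x1 /h; rewrite x1. Qed.

Lemma count_le1 (T : eqType) (P : pred T) (s : seq T) : uniq s ->
  {in s &, forall x y, P x -> P y -> x = y} -> count P s <= 1.
Proof.
move=> us Pinj; case: (boolP (has P s)) => [/hasP[x xs Px]|/hasPn Pn]; last first.
  by rewrite (eq_in_count (a2 := pred0)) ?count_pred0 // => y /Pn /negbTE.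
rewrite (eq_in_count (a2 := pred1 x)) ?count_uniq_mem ?leq_b1 // => y ys /=.
by apply/idP/eqP => [Py|->//]; apply: Pinj.
Qed.

Lemma count_mem_inj_le (T1 T2 : eqType) (f : T1 -> T2) (s : seq T1) (S : seq T2) :
  uniq s -> injective f -> count (fun x => f x \in S) s <= size S.
Proof.
move=> us finj; rewrite -size_filter -(size_map f).
apply: uniq_leq_size; first by rewrite map_inj_uniq ?filter_uniq.
by move=> _ /mapP[x + ->]; rewrite mem_filter => /andP[].
Qed.

Lemma count_has_le_sum (T1 T2 : Type) (P : T1 -> T2 -> bool) (s : seq T1) (ys : seq T2) :
  count (fun x => has (P x) ys) s <= \sum_(y <- ys) count (P^~ y) s.
Proof.
elim: ys => [|y ys IH]; first by rewrite big_nil; elim: s.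
rewrite big_cons; apply: leq_trans (leq_add (leqnn _) IH).
by rewrite -(count_predUI (P^~ y)) leq_addr.
Qed.

Lemma count_lt_gt (s : seq nat) x :
  count (fun a => a < x) s + count (fun a => x < a) s + count_mem x s = size s.
Proof. by elim: s => //= a s IH; case: ltngtP; lia. Qed.

Lemma seq_next_exists (s : seq nat) x : (exists2 y, y \in s & x < y) ->
  exists2 y, y \in s & x < y /\ forall z, z \in s -> x < z -> y <= z.
Proof.
case=> y ys xy; have exP : exists y, (y \in s) && (x < y) by exists y; rewrite ys.
case: (ex_minnP exP) => z /andP[zs xz] z_min; exists z => //; split => // t ts xt.
by apply: z_min; rewrite ts.
Qed.

Section Chain.

Variables (X Y : seq nat) (y1 yT : nat).

(* With y1 = min Y and yT = max Y, the |X| + |Y| - 1 distinct sums of the Cauchy-Davenport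
   bound. *)
Definition chain (x : nat) : seq nat :=
  [seq a + y1 | a <- X & a < x] ++ [seq x + y | y <- Y] ++ [seq a + yT | a <- X & x < a].

Lemma chainP x q : q \in chain x ->
  [\/ exists2 a, a \in X & a < x /\ q = a + y1,
      exists2 y, y \in Y & q = x + y |
      exists2 a, a \in X & x < a /\ q = a + yT].
Proof.
rewrite !mem_cat => /or3P[] /mapP[z]; rewrite ?mem_filter.
- by case/andP=> lt zX ->; apply: Or31; exists z.
- by move=> zY ->; apply: Or32; exists z.
- by case/andP=> lt zX ->; apply: Or33; exists z.
Qed.

Lemma chain_sub_sumset x : x \in X -> y1 \in Y -> yT \in Y ->
  {subset chain x <= sumset X Y}.
Proof.
move=> xX y1Y yTY q /chainP[] [z zin]; [case=> _ -> | move-> | case=> _ ->];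
  exact: allpairs_f.
Qed.

Lemma size_chain x : uniq X -> x \in X -> size (chain x) = (size X).-1 + size Y.
Proof.
move=> uX xX; rewrite !size_cat !size_map !size_filter.
have := count_lt_gt X x; rewrite count_uniq_mem // xX; lia.
Qed.

Lemma chain_uniq x : uniq X -> uniq Y -> y1 <= yT -> {in Y, forall y, y1 <= y <= yT} ->
  uniq (chain x).
Proof.
move=> uX uY y1T Y_bounds.
rewrite !cat_uniq !map_inj_uniq ?filter_uniq //; try exact: addIn; try exact: addnI.
rewrite uY has_cat negb_or /= andbT -andbA; apply/and3P; split.
- apply/hasPn => _ /mapP[y yY ->]; apply/mapP => -[a].
  by rewrite mem_filter => /andP[lt _]; have := Y_bounds y yY; lia.
- apply/hasPn => _ /mapP[a + ->]; rewrite mem_filter => /andP[lt _].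
  by apply/mapP => -[a']; rewrite mem_filter => /andP[lt' _]; lia.
- apply/hasPn => _ /mapP[a + ->]; rewrite mem_filter => /andP[lt _].
  by apply/mapP => -[y yY]; have := Y_bounds y yY; lia.
Qed.

End Chain.

Lemma sumset_card_ge (X Y : seq nat) : uniq X -> uniq Y -> X != [::] -> Y != [::] ->
  (size X).-1 + size Y <= sumset_card X Y.
Proof.
move=> uX uY /seq_min_exists[x xX _] Y0.
have [y1 y1Y y1_min] := seq_min_exists Y0; have [yT yTY yT_max] := seq_max_exists Y0.
rewrite -(size_chain Y y1 yT uX xX); apply: uniq_leq_size.
  by apply: chain_uniq => // [|y yY]; rewrite ?y1_min ?yT_max.
by move=> q /(chain_sub_sumset xX y1Y yTY); rewrite mem_undup.
Qed.

Section MinimalSumset.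

Variables (X Y : seq nat) (y1 yT : nat).
Hypotheses (uX : uniq X) (uY : uniq Y) (y1Y : y1 \in Y) (yTY : yT \in Y).
Hypotheses (y1_min : {in Y, forall y, y1 <= y}) (yT_max : {in Y, forall y, y <= yT}).
Hypothesis minimal : sumset_card X Y < size X + size Y.

Lemma minimal_sumset_chain x : x \in X -> {subset sumset X Y <= chain X Y y1 yT x}.
Proof.
move=> xX q qXY; have sub : {subset chain X Y y1 yT x <= undup (sumset X Y)}.
  by move=> p /(chain_sub_sumset xX y1Y yTY); rewrite mem_undup.
have Y_bounds : {in Y, forall y, y1 <= y <= yT} by move=> y yY; rewrite y1_min ?yT_max.
have [|_ ->] := uniq_min_size (chain_uniq x uX uY (yT_max y1Y) Y_bounds) sub.
  2: by rewrite mem_undup.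
have X0 : 0 < size X by case: (X) xX.
by move: minimal; rewrite size_chain // -[sumset_card X Y]/(size (undup (sumset X Y))); lia.
Qed.

Lemma minimal_sumset_step y2 : y2 \in Y -> y1 < y2 ->
  (forall y, y \in Y -> y < y2 -> y = y1) ->
  forall x x', x \in X -> x' \in X -> x < x' -> x + (y2 - y1) \in X /\ x + (y2 - y1) <= x'.
Proof.
move=> y2Y y12 y2_next x x' xX x'X xx'.
have shift z : x + y2 = z + y1 -> x + (y2 - y1) = z.
  by move=> e; rewrite addnBA ?(ltnW y12) // e addnK.
have /(minimal_sumset_chain x'X)/chainP[] := allpairs_f addn xX y2Y.
- by case=> a aX [lt /shift ->]; split=> //; apply: ltnW.
- case=> y yY e; have yy2 : y < y2 by rewrite -(ltn_add2l x') -e ltn_add2r.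
  by move: e; rewrite (y2_next y yY yy2) => /shift ->.
- case=> a _ [lt e]; have := leq_add (ltn_trans xx' lt) (yT_max y2Y).
  by rewrite -e addSn ltnn.
Qed.

End MinimalSumset.

Section Progression.

Variables (X : seq nat) (d : nat).
Hypotheses (d_gt0 : 0 < d)
  (X_step : forall x x', x \in X -> x' \in X -> x < x' -> x + d \in X /\ x + d <= x').

Lemma progression_diff x z : x \in X -> z \in X -> x <= z -> exists m, z = x + m * d.
Proof.
move=> + zX; have [n] := ubnP (z - x); elim: n x => // n IHn x zx_lt xX.
case: ltngtP => // [lt _ | <- _]; last by exists 0; rewrite addn0.
have [xdX xdz] := X_step xX zX lt.
have [|m ->] := IHn (x + d) _ xdX xdz; first lia.
by exists m.+1; rewrite mulSn addnA.
Qed.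

Lemma progression_shift x z m : x \in X -> z \in X -> x + m * d <= z -> x + m * d \in X.
Proof.
move=> xX zX; elim: m => [|m IHm]; first by rewrite addn0.
rewrite mulSnr addnA => le; have lt : x + m * d < z by lia.
by have [] := X_step (IHm (ltnW lt)) zX lt.
Qed.

End Progression.

Definition unique_primary_sums (ap as_ bp bs : seq nat) : Prop :=
  forall a b x y, a \in ap -> b \in bp -> x \in ap ++ as_ -> y \in bp ++ bs ->
    a + b = x + y -> x = a /\ y = b.

Lemma degree_table_unique_primary_sums K L T ap as_ bp bs :
  degree_table K L T ap as_ bp bs -> unique_primary_sums ap as_ bp bs.
Proof.
move=> [_ [_ _ unique_rep]] a b x y aP bP xA yB e.
have aA : a \in ap ++ as_ by rewrite mem_cat aP.
have bB : b \in bp ++ bs by rewrite mem_cat bP.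
have [ij [_ ij_uniq]] := unique_rep (a + b) (ex_intro _ a (ex_intro _ b (And3 aP bP erefl))).
have /esym := ij_uniq (a, b) (And3 aA bB erefl).
by rewrite (ij_uniq (x, y) (And3 xA yB e)) => -[-> ->].
Qed.

Lemma unique_primary_sums_sym ap as_ bp bs :
  unique_primary_sums ap as_ bp bs -> unique_primary_sums bp bs ap as_.
Proof.
move=> uniq_ab b a y x bP aP yB xA e.
by have [-> ->] := uniq_ab a b x y aP bP xA yB (etrans (addnC _ _) (etrans e (addnC _ _))).
Qed.

Lemma sumset_card_sym (X Y : seq nat) : sumset_card X Y = sumset_card Y X.
Proof.
apply/perm_size/perm_undup => q; apply/allpairsP/allpairsP => -[[x y] [/= xX yY ->]].
all: by exists (y, x); rewrite addnC.
Qed.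

Section DegreeTable.

Variables (ap as_ bp bs : seq nat).
Local Notation A := (ap ++ as_).
Local Notation B := (bp ++ bs).
Hypotheses (uA : uniq A) (uB : uniq B) (primary_uniq : unique_primary_sums ap as_ bp bs).

Definition secondary_sum (q : nat) : Prop :=
  exists x y, [/\ x \in A, y \in B, (x \in as_) || (y \in bs) & q = x + y].

Lemma secondary_sums_card Q : uniq Q -> (forall q, q \in Q -> secondary_sum q) ->
  size ap * size bp + size Q <= sumset_card A B.
Proof.
move=> uQ Qsec; have uap : uniq ap by move: uA; rewrite cat_uniq => /andP[].
have ubp : uniq bp by move: uB; rewrite cat_uniq => /andP[].
have primary_A a b : a \in ap -> b \in bp -> a \in A /\ b \in B.
  by move=> aP bP; rewrite !mem_cat aP bP.
have uP : uniq (sumset ap bp).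
  apply: allpairs_uniq => // -[? ?] [? ?] /allpairsP[[a b] [/= aP bP [-> ->]]].
  move=> /allpairsP[[a' b'] [/= a'P b'P [-> ->]]] /= e.
  have [a'A b'B] := primary_A a' b' a'P b'P.
  by have [-> ->] := primary_uniq aP bP a'A b'B e.
rewrite -(size_allpairs addn) -size_cat; apply: uniq_leq_size.
  rewrite cat_uniq uP uQ andbT; apply/hasPn => q /Qsec [x [y [xA yB xy_sec ->]]].
  apply/negP => /allpairsP[[a b] [/= aP bP e]].
  move: xy_sec; have [-> ->] := primary_uniq aP bP xA yB (esym e).
  case/orP; [exact: uniq_cat_disjoint uA aP | exact: uniq_cat_disjoint uB bP].
move=> q; rewrite mem_cat mem_undup => /orP[/allpairsP[[a b] [/= aP bP ->]]|].
  by have [aA bB] := primary_A a b aP bP; apply: allpairs_f.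
by move=> /Qsec [x [y [xA yB _ ->]]]; apply: allpairs_f.
Qed.

Lemma sumset_secondary q : q \in sumset A bs -> secondary_sum q.
Proof.
by case/allpairsP=> -[x y] [/= xA yS ->]; exists x, y; rewrite [y \in B]mem_cat yS !orbT.
Qed.

Lemma sumset_card_ge_shift s : s \in as_ ->
  size ap * size bp + sumset_card A bs + count (fun b => s + b \notin sumset A bs) bp
    <= sumset_card A B.
Proof.
move=> sS; have ubp : uniq bp by move: uB; rewrite cat_uniq => /andP[].
rewrite -addnA -size_filter -(size_map (addn s) (filter _ bp)) -size_cat.
apply: secondary_sums_card.
  rewrite cat_uniq undup_uniq map_inj_uniq ?filter_uniq //=; last exact: addnI.
  rewrite andbT; apply/hasPn => _ /mapP[b + ->].
  by rewrite mem_filter mem_undup => /andP[].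
move=> q; rewrite mem_cat mem_undup => /orP[/sumset_secondary //|/mapP[b + ->]].
by rewrite mem_filter => /andP[_ bP]; exists s, b; rewrite !mem_cat sS bP orbT.
Qed.

Lemma primary_shift_inj a a' b b' c c' : a \in ap -> a' \in ap -> b \in bp -> b' \in bp ->
  c + b = a + c' -> c + b' = a' + c' -> b = b'.
Proof.
move=> aP a'P bP b'P e e'; have a'A : a' \in A by rewrite mem_cat a'P.
have bB : b \in B by rewrite mem_cat bP.
have e'' : a + b' = a' + b.
  by apply: (@addnI c); rewrite [LHS]addnCA [RHS]addnCA e e' addnCA.
by have [] := primary_uniq aP b'P a'A bB e''.
Qed.

(* A given t in bs accounts for at most one b through ap, by unique representation, and
   for at most |as_| - 1 through as_, as s + b = s + t would put b in bs. *)
Lemma count_shift_in_sumset s : s \in as_ ->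
  count (fun b => s + b \in sumset A bs) bp <= size as_ * size bs.
Proof.
move=> sS; have uas : uniq as_ by move: uA; rewrite cat_uniq => /and3P[].
have ubp : uniq bp by move: uB; rewrite cat_uniq => /andP[].
pose via_ap b := has (fun t => has (fun a => s + b == a + t) ap) bs.
pose via_as b := s + b \in sumset (rem s as_) bs.
have split_mem : {in bp, forall b, (s + b \in sumset A bs) = via_ap b || via_as b}.
  move=> b bP; apply/allpairsP/orP => [[[x t] [/= xA tS e]]|].
  - move: xA; rewrite mem_cat => /orP[xP|xS].
      by left; apply/hasP; exists t => //; apply/hasP; exists x => //; apply/eqP.
    right; apply/allpairsP; exists (x, t); split => //=.
    rewrite mem_rem_uniq // inE xS andbT; apply/eqP => xs.
    by apply: (uniq_cat_disjoint uB bP); rewrite xs in e; rewrite (addnI e).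
  - case=> [/hasP[t tS /hasP[a aP /eqP e]] | /allpairsP[[x t] [/= xS tS e]]].
      by exists (a, t); rewrite /= mem_cat aP.
    by exists (x, t); rewrite /= mem_cat (mem_rem xS) orbT.
rewrite (eq_in_count split_mem).
apply: (leq_trans (n := count via_ap bp + count via_as bp)).
  by rewrite -(count_predUI via_ap via_as) leq_addr.
have ap_part : count via_ap bp <= size bs.
  rewrite -sum1_size.
  apply: leq_trans (count_has_le_sum (fun b t => has (fun a => s + b == a + t) ap) _ _) _.
  apply: leq_sum => t _; apply: count_le1 => // b b' bP b'P.
  move=> /hasP[a aP /eqP e] /hasP[a' a'P /eqP e'].
  exact: primary_shift_inj aP a'P bP b'P e e'.
have as_part : count via_as bp <= (size as_).-1 * size bs.
  rewrite -(size_rem sS) -(size_allpairs addn); apply: count_mem_inj_le => //; exact: addnI.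
have as0 : 0 < size as_ by case: (as_) sS.
by rewrite -[size as_](prednK as0) mulSn; apply: leq_add.
Qed.

Section MinimalShifts.

Variables (t1 tT : nat).
Hypotheses (t1S : t1 \in bs) (tTS : tT \in bs).
Hypotheses (t1_min : {in bs, forall t, t1 <= t}) (tT_max : {in bs, forall t, t <= tT}).
Hypothesis minimal : sumset_card A bs < size A + size bs.
Hypothesis shifts_in : forall s b, s \in as_ -> b \in bp -> s + b \in sumset A bs.

Lemma shift_cases s b : s \in as_ -> b \in bp ->
  (b < t1 /\ exists2 a, a \in A & a < s /\ s + b = a + t1) \/
  (tT < b /\ exists2 a, a \in A & s < a /\ s + b = a + tT).
Proof.
move=> sS bP; have sA : s \in A by rewrite mem_cat sS orbT.
have ubs : uniq bs by move: uB; rewrite cat_uniq => /and3P[].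
have := minimal_sumset_chain uA ubs t1S tTS t1_min tT_max minimal sA (shifts_in sS bP).
case/chainP => [[a aA [lt e]] | [t tS e] | [a aA [gt e]]].
- by left; split; [rewrite -(ltn_add2l s) e ltn_add2r | exists a].
- by case: (uniq_cat_disjoint uB bP); rewrite (addnI e).
- by right; split; [rewrite -(ltn_add2l s) e ltn_add2r | exists a].
Qed.

Lemma shift_below_ap s b : s \in as_ -> {in as_, forall s', s <= s'} ->
  b \in bp -> b < t1 -> exists2 a, a \in ap & s + b = a + t1.
Proof.
move=> sS s_min bP bt1; case: (shift_cases sS bP) => [[_ [a aA [lt e]]]|[tTb _]].
  exists a => //; move: aA; rewrite mem_cat => /orP[//|aS].
  by rewrite ltnNge s_min in lt.
by have := ltn_trans tTb bt1; rewrite ltnNge tT_max.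
Qed.

Lemma shift_above_ap s b : s \in as_ -> {in as_, forall s', s' <= s} ->
  b \in bp -> tT < b -> exists2 a, a \in ap & s < a /\ s + b = a + tT.
Proof.
move=> sS s_max bP tTb; case: (shift_cases sS bP) => [[bt1 _]|[_ [a aA [lt e]]]].
  by have := ltn_trans tTb bt1; rewrite ltnNge tT_max.
exists a => //; move: aA; rewrite mem_cat => /orP[//|aS].
by rewrite ltnNge s_max in lt.
Qed.

Hypothesis as_nonempty : as_ != [::].

Lemma shifts_below_absurd b b' : b \in bp -> b' \in bp -> b < b' -> b' < t1 -> False.
Proof.
move=> bP b'P lt b't1; have [s sS s_min] := seq_min_exists as_nonempty.
have [a aP e] := shift_below_ap sS s_min bP (ltn_trans lt b't1).
have [a' a'P e'] := shift_below_ap sS s_min b'P b't1.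
by rewrite (primary_shift_inj aP a'P bP b'P e e') ltnn in lt.
Qed.

Lemma shifts_above_absurd b b' : b \in bp -> b' \in bp -> b < b' -> tT < b -> False.
Proof.
move=> bP b'P lt tTb; have [s sS s_max] := seq_max_exists as_nonempty.
have [a aP [_ e]] := shift_above_ap sS s_max bP tTb.
have [a' a'P [_ e']] := shift_above_ap sS s_max b'P (ltn_trans tTb lt).
by rewrite (primary_shift_inj aP a'P bP b'P e e') ltnn in lt.
Qed.

(* If t1 < tT, the set A is an arithmetic progression of step t2 - t1 (t2 the successor of
   t1 in bs), so with s + b = a + t1 and a' in ap above s, a' + b = (a + (a' - s)) + t1 is a
   second representation of a primary sum; if t1 = tT this is directly a' + b = a + b'. *)
Lemma shifts_mixed_absurd b b' : b \in bp -> b' \in bp -> b < t1 -> tT < b' -> False.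
Proof.
move=> bP b'P bt1 tTb'; have [s sS s_max] := seq_max_exists as_nonempty.
have sA : s \in A by rewrite mem_cat sS orbT.
have [a' a'P [sa' e']] := shift_above_ap sS s_max b'P tTb'.
case: (shift_cases sS bP) => [[_ [a aA [as_lt e]]]|[tTb _]]; last first.
  by have := ltn_trans tTb bt1; rewrite ltnNge tT_max.
move: (tT_max t1S); rewrite leq_eqVlt => /orP[/eqP t1_eq | t1_lt].
  have b'B : b' \in B by rewrite mem_cat b'P.
  have e'' : a' + b = a + b'.
    by apply: (@addnI s); rewrite [LHS]addnCA [RHS]addnCA e e' t1_eq addnCA.
  have [_ eb] := primary_uniq a'P bP aA b'B e''.
  by move: tTb'; rewrite eb -t1_eq ltnNge ltnW.
have [t2 t2S [t12 t2_min]] := seq_next_exists (ex_intro2 _ _ tT tTS t1_lt).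
have t2_next y : y \in bs -> y < t2 -> y = t1.
  move=> yS yt2; apply/eqP; rewrite eqn_leq t1_min // andbT leqNgt; apply/negP => t1y.
  by rewrite ltnNge t2_min in yt2.
have ubs : uniq bs by move: uB; rewrite cat_uniq => /and3P[].
have step := minimal_sumset_step uA ubs t1S tTS t1_min tT_max minimal t2S t12 t2_next.
have d_gt0 : 0 < t2 - t1 by rewrite subn_gt0.
have a'A : a' \in A by rewrite mem_cat a'P.
have [m em] := progression_diff d_gt0 step sA a'A (ltnW sa').
have amA : a + m * (t2 - t1) \in A.
  by apply: (progression_shift d_gt0 step aA a'A); rewrite em leq_add2r ltnW.
have t1B : t1 \in B by rewrite mem_cat t1S orbT.
have e'' : a' + b = a + m * (t2 - t1) + t1 by rewrite em addnAC e addnAC.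
have [_ et] := primary_uniq a'P bP amA t1B e''.
by rewrite et ltnn in bt1.
Qed.

Lemma shifts_absurd : 1 < size bp -> False.
Proof.
have ubp : uniq bp by move: uB; rewrite cat_uniq => /andP[].
move=> /(uniq_size_gt1 ubp) [b [b' [bP b'P lt]]].
have [s sS _] := seq_min_exists as_nonempty.
case: (shift_cases sS bP) => [[bt1 _]|[tTb _]]; last exact: shifts_above_absurd bP b'P lt tTb.
case: (shift_cases sS b'P) => [[b't1 _]|[tTb' _]].
  exact: shifts_below_absurd bP b'P lt b't1.
exact: shifts_mixed_absurd bP b'P bt1 tTb'.
Qed.

End MinimalShifts.

Lemma minimal_sumset_shift_outside : 1 < size bp -> as_ != [::] -> bs != [::] ->
  sumset_card A bs < size A + size bs ->
  exists2 s, s \in as_ & has (fun b => s + b \notin sumset A bs) bp.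
Proof.
move=> bp2 as0 bs0 minimal.
have [t1 t1S t1_min] := seq_min_exists bs0; have [tT tTS tT_max] := seq_max_exists bs0.
case: (boolP (has (fun s => has (fun b => s + b \notin sumset A bs) bp) as_)).
  by case/hasP=> s; exists s.
move/hasPn=> none; case: (shifts_absurd t1S tTS t1_min tT_max minimal _ as0 bp2) => s b sS bP.
by move/hasPn/(_ b bP): (none s sS); rewrite negbK.
Qed.

Lemma sumset_card_secondary_ge : as_ != [::] -> bs != [::] ->
  (size A).-1 + size bs <= sumset_card A bs.
Proof.
move=> as0 bs0; have ubs : uniq bs by move: uB; rewrite cat_uniq => /and3P[].
by apply: sumset_card_ge => //; case: (ap).
Qed.

Lemma sumset_card_lb : as_ != [::] -> bs != [::] ->
  size ap * size bp + (size A).-1 + size bs <= sumset_card A B.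
Proof.
move=> as0 bs0; have [s sS _] := seq_min_exists as0.
have := sumset_card_secondary_ge as0 bs0; have := sumset_card_ge_shift sS; lia.
Qed.

Lemma sumset_card_lb_strict : 1 < size bp -> as_ != [::] -> bs != [::] ->
  size ap * size bp + size A + size bs <= sumset_card A B.
Proof.
move=> bp2 as0 bs0; have A0 : 0 < size A by rewrite size_cat ltn_addl // lt0n size_eq0.
case: (ltnP (sumset_card A bs) (size A + size bs)) => [minimal | large].
  have [s sS] := minimal_sumset_shift_outside bp2 as0 bs0 minimal; rewrite has_count.
  have := sumset_card_secondary_ge as0 bs0; have := sumset_card_ge_shift sS; lia.
have [s sS _] := seq_min_exists as0; have := sumset_card_ge_shift sS; lia.
Qed.

Lemma sumset_card_lb_quadratic : as_ != [::] -> bs != [::] ->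
  size ap * size bp + (size A).-1 + size bs + size bp <= sumset_card A B + size as_ * size bs.
Proof.
move=> as0 bs0; have [s sS _] := seq_min_exists as0.
have := count_predC (fun b => s + b \in sumset A bs) bp.
rewrite [count (predC _) _](@eq_count _ _ (fun b => s + b \notin sumset A bs)) //.
have := sumset_card_secondary_ge as0 bs0; have := sumset_card_ge_shift sS.
have := count_shift_in_sumset sS; lia.
Qed.

End DegreeTable.

Theorem theorem2 (K L T : nat) (ap as_ bp bs : seq nat) :
  0 < K -> 0 < L -> 0 < T ->
  degree_table K L T ap as_ bp bs ->
  let N := sumset_card (ap ++ as_) (bp ++ bs) in
  [/\ K * L + maxn K L + 2 * T - 1 <= N,
      (3 * maxn K L + 3 * T - 2 < K * L \/ (2 <= K /\ K = L)) ->
        K * L + maxn K L + 2 * T <= N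
    & ((K * L + K + L + 2 * T)%:Z - 1 - (T * minn K (minn L T))%:Z <= N%:Z)%R ].
Proof.
move=> K0 L0 T0 table /=; have [[sap sas sbp sbs] [uA uB _]] := table.
have uniq_ab := degree_table_unique_primary_sums table.
have uniq_ba := unique_primary_sums_sym uniq_ab.
have as0 : as_ != [::] by rewrite -size_eq0 sas -lt0n.
have bs0 : bs != [::] by rewrite -size_eq0 sbs -lt0n.
have lbK := sumset_card_lb uA uB uniq_ab as0 bs0.
have lbL := sumset_card_lb uB uA uniq_ba bs0 as0.
have lbQ := sumset_card_lb_quadratic uA uB uniq_ab as0 bs0.
rewrite sumset_card_sym !size_cat sap sas sbp sbs in lbL.
rewrite !size_cat sap sas sbp sbs in lbK lbQ.
split.
- by case: (leqP K L) => _; lia.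
- move=> hyp; case: (leqP L K) => LK.
    have bp2 : 1 < size bp by rewrite sbp; nia.
    have := sumset_card_lb_strict uA uB uniq_ab bp2 as0 bs0.
    by rewrite !size_cat sap sas sbp sbs; lia.
  have ap2 : 1 < size ap by rewrite sap; nia.
  have := sumset_card_lb_strict uB uA uniq_ba ap2 bs0 as0.
  by rewrite sumset_card_sym !size_cat sap sas sbp sbs; lia.
- have mT : minn K (minn L T) <= T * minn K (minn L T) by rewrite leq_pmull.
  case: (leqP T (minn K L)) => TKL; last lia.
  have -> : minn K (minn L T) = T by lia.
  lia.
Qed.
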